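(* For every $\lambda\in\Lambda^{\bullet}(n,r)$, the map $\mathrm{ro}:\mathrm{cb}(\lambda)\to\Lambda(n,r)_{\preceq\lambda}$, $A\mapsto\mathrm{ro}(A)$, is a bijection.
   Context: Let $n,r\ge 0$. $\Lambda(n,r)$ is the set of weak compositions $(\lambda_1,\dots,\lambda_n)$ of $r$ into $n$ nonnegative parts. $\Lambda^{\bullet}(n,r)$ is the set of $\lambda\in\Lambda(n,r)$ such that $\lambda_i=0$ implies $\lambda_j=0$ for all $j>i$. For an $n\times n$ matrix $A$, $\mathrm{ro}(A)$ and $\mathrm{co}(A)$ denote its row-sum and column-sum vectors. A column block diagonal matrix is a matrix $A=(a_{i,j})$ with nonnegative integer entries such that $a_{i,j}>0$ implies $a_{i',s}=0$ for all $i'\le i$ and $s>j$. $\mathrm{cb}(\lambda)$ is the set of $n\times n$ column block diagonal matrices $A$ with $\mathrm{co}(A)=\lambda$. For $\mu,\lambda\in\Lambda(n,r)$, $\mu$ is a refinement of $\lambda$, written $\mu\preceq\lambda$, if $\mu$ is obtained by subdividing the parts of $\lambda$ in order. Precisely, if $\lambda=(\lambda_1,\dots,\lambda_t,0,\dots,0)$ with $\lambda_1,\dots,\lambda_t>0$, then there are indices $1=i_1<i_2<\dots<i_{t+1}=n+1$ with $\lambda_k=\mu_{i_k}+\dots+\mu_{i_{k+1}-1}$ for $1\le k\le t$. $\Lambda(n,r)_{\preceq\lambda}=\{\mu\in\Lambda(n,r):\mu\preceq\lambda\}$. *)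

From mathcomp Require Import all_boot all_algebra.
Set Implicit Arguments. Unset Strict Implicit. Unset Printing Implicit Defensive.

(* Indices are 0-based: 'I_n = {0,...,n-1}. Weak compositions are functions
   'I_n -> nat; n x n matrices have entries in nat. *)

Definition wcomp (n r : nat) (lam : 'I_n -> nat) : Prop :=
  \sum_(i < n) lam i = r.

Definition wcomp_bullet (n r : nat) (lam : 'I_n -> nat) : Prop :=
  wcomp r lam /\ forall i j : 'I_n, lam i = 0 -> i < j -> lam j = 0.

Definition ro (n : nat) (A : 'M[nat]_n) : 'I_n -> nat :=
  fun i => \sum_(j < n) A i j.
Definition co (n : nat) (A : 'M[nat]_n) : 'I_n -> nat :=
  fun j => \sum_(i < n) A i j.

Definition col_block_diag (n : nat) (A : 'M[nat]_n) : Prop :=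
  forall i j : 'I_n, 0 < A i j ->
    forall i' s : 'I_n, i' <= i -> j < s -> A i' s = 0.

Definition cb (n : nat) (lam : 'I_n -> nat) (A : 'M[nat]_n) : Prop :=
  col_block_diag A /\ forall j, co A j = lam j.

Definition npos (n : nat) (lam : 'I_n -> nat) : nat :=
  #|[pred i : 'I_n | 0 < lam i]|.

(* mu refines lam (lam of the form (lam_1..lam_t,0..0) with lam_k > 0):
   there are cut points 0 = c_0 < c_1 < ... < c_t = n (0-based version of
   1 = i_1 < ... < i_{t+1} = n+1) with lam_k = mu_{c_k} + ... + mu_{c_{k+1}-1}.
   Degenerate case t = 0 (lam = 0): taken to hold (refinement is reflexive). *)
Definition refines (n : nat) (mu lam : 'I_n -> nat) : Prop :=
  let t := npos lam in
  t = 0 \/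
  exists c : nat -> nat,
    [/\ c 0 = 0, c t = n,
        (forall k, k < t -> c k < c k.+1) &
        forall k : 'I_n, k < t ->
          lam k = \sum_(j < n | (c k <= j) && (j < c k.+1)) mu j].

Definition refinements (n r : nat) (lam : 'I_n -> nat) (mu : 'I_n -> nat) : Prop :=
  wcomp r mu /\ refines mu lam.

From mathcomp Require Import all_boot all_algebra zify.
Set Implicit Arguments. Unset Strict Implicit. Unset Printing Implicit Defensive.

(* A column block diagonal matrix has at most one positive entry in each row,
   and these entries move weakly to the right going down.  Hence row [i] of
   [A] in cb(lam) sits in the column [k] whose block
   [[lam_0 + ... + lam_(k-1), lam_0 + ... + lam_k)] contains the prefix sum
   [ro_0 + ... + ro_(i-1)]: [A] is determined by [ro A], every prefix sum of
   [lam] is a prefix sum of [ro A] (so [ro A] refines [lam]), and for a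
   refinement [mu] of [lam] the same recipe builds a matrix of cb(lam) with row
   sums [mu]. *)

Section PrefixSums.

Variable n : nat.
Implicit Types f g : 'I_n -> nat.

Definition psum f (m : nat) : nat := \sum_(i < n | i < m) f i.

Lemma psum0 f : psum f 0 = 0.
Proof. by rewrite /psum big_pred0. Qed.

Lemma psum_full f m : n <= m -> psum f m = \sum_(i < n) f i.
Proof. by move=> le_nm; apply: eq_bigl => i; exact: leq_trans (ltn_ord i) le_nm. Qed.

Lemma psumS f (i : 'I_n) : psum f i.+1 = psum f i + f i.
Proof.
rewrite /psum (bigD1 i) //= addnC; congr (_ + _).
by apply: eq_bigl => j; rewrite -val_eqE /=; lia.
Qed.

Lemma psum_split f a b : a <= b ->
  psum f b = psum f a + \sum_(j < n | a <= j < b) f j.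
Proof.
move=> le_ab; rewrite /psum (bigID (fun j : 'I_n => a <= j)) /= addnC.
congr (_ + _); apply: eq_bigl => j; last by rewrite andbC.
by case: (ltnP j a) => lt_ja /=; rewrite ?andbF // andbT (leq_trans lt_ja).
Qed.

Lemma leq_psum f : {homo psum f : a b / a <= b}.
Proof. by move=> a b le_ab; rewrite (psum_split f le_ab) leq_addr. Qed.

Lemma eq_psum f g : f =1 g -> psum f =1 psum g.
Proof. by move=> fg m; apply: eq_bigr => i _; exact: fg. Qed.

Lemma psum_leq_pos f (i : 'I_n) a : 0 < f i -> (psum f a <= psum f i) = (a <= i).
Proof.
move=> f_i_gt0; case: (leqP a i) => [le_ai|lt_ia]; first exact: leq_psum.
by apply/negbTE; rewrite -ltnNge; have := leq_psum f lt_ia; rewrite psumS; lia.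
Qed.

Lemma psum_ltn_pos f (i : 'I_n) b : 0 < f i -> (psum f i < psum f b) = (i < b).
Proof.
move=> f_i_gt0; case: (ltnP i b) => [lt_ib|le_bi]; last first.
  by apply/negbTE; rewrite -leqNgt leq_psum.
by have := leq_psum f lt_ib; rewrite psumS; lia.
Qed.

Lemma card_ord_ltn m : m <= n -> #|[pred i : 'I_n | i < m]| = m.
Proof.
move=> le_mn; rewrite -sum1_card; transitivity (psum (fun=> 1) m).
  by apply: eq_bigl => i; rewrite inE.
elim: m le_mn => [|m IHm] lt_mn; first exact: psum0.
by rewrite (psumS _ (Ordinal lt_mn)) IHm ?addn1 // ltnW.
Qed.

End PrefixSums.

Lemma sum_nat_gt0_exists (I : finType) (F : I -> nat) :
  0 < \sum_i F i -> exists i, 0 < F i.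
Proof.
rewrite lt0n sum_nat_eq0 negb_forall => /existsP[i].
by rewrite implyTb -lt0n; exists i.
Qed.

Section BulletCompositions.

Variables (n r : nat) (lam : 'I_n -> nat).
Hypothesis lam_bullet : wcomp_bullet r lam.

Lemma npos_leq : npos lam <= n.
Proof. by rewrite /npos (leq_trans (max_card _)) ?card_ord. Qed.

Lemma wcomp_bullet_posE (k : 'I_n) : (0 < lam k) = (k < npos lam).
Proof.
have zero_up (i j : 'I_n) : i <= j -> lam i = 0 -> lam j = 0.
  rewrite leq_eqVlt => /orP[/eqP/val_inj -> //|lt_ij lam_i0].
  exact: (proj2 lam_bullet) lam_i0 lt_ij.
case: (posnP (lam k)) => [lam_k0|lam_k_gt0]; apply/esym.
  apply/negbTE; rewrite -leqNgt /npos -(card_ord_ltn (ltnW (ltn_ord k))).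
  apply/subset_leq_card/subsetP => i; rewrite !inE; case: (ltnP i k) => // le_ki.
  by rewrite (zero_up _ _ le_ki lam_k0).
rewrite /npos -(card_ord_ltn (ltn_ord k)); apply/subset_leq_card/subsetP => i.
rewrite !inE ltnS lt0n => le_ik; apply/eqP => lam_i0.
by rewrite (zero_up _ _ le_ik lam_i0) in lam_k_gt0.
Qed.

Lemma psum_npos : psum lam (npos lam) = r.
Proof.
rewrite -(proj1 lam_bullet) /wcomp [RHS](bigID (fun i : 'I_n => i < npos lam)) /=.
rewrite [X in _ = _ + X]big1 ?addn0 // => i.
by rewrite -wcomp_bullet_posE lt0n negbK => /eqP.
Qed.

End BulletCompositions.

Section ColumnBlockDiagonal.

Variables (n : nat) (A : 'M[nat]_n).
Hypothesis A_cbd : col_block_diag A.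

Lemma cbd_ro (i k : 'I_n) : 0 < A i k -> ro A i = A i k.
Proof.
move=> A_ik_gt0; rewrite /ro (bigD1 k) //= big1 ?addn0 // => j ne_jk.
case: (ltngtP j k) => [lt_jk|lt_kj|/val_inj eq_jk]; last by rewrite eq_jk eqxx in ne_jk.
- apply/eqP; rewrite -leqn0 leqNgt; apply/negP => A_ij_gt0.
  by rewrite (A_cbd A_ij_gt0 (leqnn i) lt_jk) in A_ik_gt0.
- exact: A_cbd A_ik_gt0 _ _ (leqnn i) lt_kj.
Qed.

(* Above a positive entry [A i k] all mass sits in columns [<= k], and left of
   it all mass sits in rows [<= i]. *)
Lemma cbd_psum_ro (i k : 'I_n) : 0 < A i k ->
  psum (ro A) i = psum (co A) k + psum (fun i' => A i' k) i.
Proof.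
move=> A_ik_gt0.
have ro_above (i' : 'I_n) : i' < i ->
    ro A i' = \sum_(j < n | j < k) A i' j + A i' k.
  move=> lt_i'i; rewrite /ro (bigID (fun j : 'I_n => j < k)) /=; congr (_ + _).
  rewrite (bigD1 k) ?ltnn //= big1 ?addn0 // => j /andP[le_kj ne_jk].
  have lt_kj : k < j by rewrite ltn_neqAle leqNgt le_kj andbT eq_sym.
  exact: A_cbd A_ik_gt0 _ _ (ltnW lt_i'i) lt_kj.
rewrite /psum (eq_bigr _ ro_above) big_split /=; congr (_ + _).
rewrite exchange_big /=; apply: eq_bigr => j lt_jk.
rewrite /co [RHS](bigID (fun i' : 'I_n => i' < i)) /= [X in _ = _ + X]big1 ?addn0 //.
move=> i'; rewrite -leqNgt => le_ii'; apply/eqP; rewrite -leqn0 leqNgt.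
by apply/negP => A_i'j_gt0; rewrite (A_cbd A_i'j_gt0 le_ii' lt_jk) in A_ik_gt0.
Qed.

End ColumnBlockDiagonal.

Section StaircaseMatrix.

Variable n : nat.
Implicit Types (lam mu : 'I_n -> nat) (A : 'M[nat]_n).

Definition in_block lam (k : 'I_n) (x : nat) : bool :=
  psum lam k <= x < psum lam k + lam k.

Lemma in_block_inj lam (j k : 'I_n) x :
  in_block lam j x -> in_block lam k x -> j = k.
Proof.
rewrite /in_block => /andP[lo_j hi_j] /andP[lo_k hi_k].
case: (ltngtP j k) => [lt_jk|lt_kj|/val_inj //].
  by have := leq_psum lam lt_jk; rewrite psumS; lia.
by have := leq_psum lam lt_kj; rewrite psumS; lia.
Qed.

Definition cb_mx lam mu : 'M[nat]_n :=
  \matrix_(i, k) (if in_block lam k (psum mu i) then mu i else 0).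

Lemma eq_cb_mx lam mu mu' : mu =1 mu' -> cb_mx lam mu = cb_mx lam mu'.
Proof.
by move=> eq_mu; apply/matrixP => i k; rewrite !mxE (eq_psum eq_mu) eq_mu.
Qed.

Lemma col_block_diag_cb_mx lam mu : col_block_diag (cb_mx lam mu).
Proof.
move=> i k; rewrite mxE; case: ifP => // /andP[_ hi_k] _ i' s le_i'i lt_ks.
rewrite mxE; case: ifP => // /andP[lo_s _].
have := leq_psum mu le_i'i; have := leq_psum lam lt_ks; rewrite psumS; lia.
Qed.

Lemma ro_cb_mx lam mu : \sum_i lam i = \sum_i mu i -> ro (cb_mx lam mu) =1 mu.
Proof.
move=> eq_tot i; rewrite /ro; case: (posnP (mu i)) => [mu_i0|mu_i_gt0].
  by rewrite mu_i0 big1 // => k _; rewrite mxE mu_i0; case: ifP.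
have [k block_k] : exists k, in_block lam k (psum mu i).
  have k0_le : psum lam (Ordinal (leq_ltn_trans (leq0n i) (ltn_ord i))) <= psum mu i.
    by rewrite psum0.
  case: (arg_maxnP (P := fun k : 'I_n => psum lam k <= psum mu i) val k0_le) => k lo_k k_max.
  exists k; rewrite /in_block lo_k -psumS /=.
  case: (ltnP k.+1 n) => [lt_k1n|le_nk1].
    by rewrite ltnNge; apply/negP => /(k_max (Ordinal lt_k1n)); rewrite /= ltnn.
  rewrite (psum_full _ le_nk1) eq_tot -(psum_full mu (leqnn n)).
  by have := psumS mu i; have := leq_psum mu (ltn_ord i); lia.
rewrite (bigD1 k) //= mxE block_k big1 ?addn0 // => j ne_jk; rewrite mxE.
by case: ifP => // block_j; rewrite (in_block_inj block_j block_k) eqxx in ne_jk.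
Qed.

Lemma cb_eq_cb_mx lam A : cb lam A -> A = cb_mx lam (ro A).
Proof.
move=> [A_cbd co_A]; apply/matrixP => i k; rewrite mxE.
have pos_entry j : 0 < A i j -> in_block lam j (psum (ro A) i) /\ ro A i = A i j.
  move=> A_ij_gt0; rewrite (cbd_psum_ro A_cbd A_ij_gt0) (eq_psum co_A).
  rewrite (cbd_ro A_cbd A_ij_gt0); split => //.
  have : psum (fun i' => A i' j) i.+1 <= lam j.
    by rewrite -co_A /co -(psum_full _ (leqnn n)) leq_psum.
  by rewrite psumS /in_block; lia.
case: (posnP (A i k)) => [A_ik0|A_ik_gt0]; last first.
  by have [-> ->] := pos_entry k A_ik_gt0.
rewrite A_ik0; case: ifP => // block_k; case: (posnP (ro A i)) => // ro_i_gt0.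
have [j A_ij_gt0] := sum_nat_gt0_exists ro_i_gt0.
have [block_j _] := pos_entry j A_ij_gt0.
by rewrite (in_block_inj block_j block_k) A_ik0 in A_ij_gt0.
Qed.

End StaircaseMatrix.

Section Refinements.

Variables (n r : nat) (lam : 'I_n -> nat).
Hypothesis lam_bullet : wcomp_bullet r lam.

Lemma refines_of_cuts mu (c : nat -> nat) :
  c 0 = 0 -> c (npos lam) = n ->
  (forall m, m <= npos lam -> psum mu (c m) = psum lam m) -> refines mu lam.
Proof.
move=> c0 ct c_hits.
have c_lt k : k < npos lam -> c k < c k.+1.
  move=> lt_kt; have lt_kn : k < n := leq_trans lt_kt (npos_leq lam).
  have := wcomp_bullet_posE lam_bullet (Ordinal lt_kn); rewrite lt_kt => lam_k_gt0.
  have := psumS lam (Ordinal lt_kn); rewrite /= -!c_hits ?(ltnW lt_kt) // => psum_c.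
  by rewrite ltnNge; apply/negP => /(leq_psum mu); lia.
right; exists c; split => // k lt_kt.
have := psumS lam k; rewrite -!c_hits ?(ltnW lt_kt) //.
by rewrite (psum_split mu (ltnW (c_lt k lt_kt))); lia.
Qed.

Lemma refines_of_psum_hits mu : wcomp r mu ->
  (forall k : 'I_n, k < npos lam -> exists i : 'I_n, psum mu i = psum lam k) ->
  refines mu lam.
Proof.
move=> wcomp_mu hits; case: (posnP (npos lam)) => [t0|t_gt0]; first by left.
pose c m := if m == 0 then 0 else if m < npos lam then
  (if [pick i : 'I_n | psum mu i == psum lam m] is Some i then val i else 0) else n.
apply: (@refines_of_cuts _ c) => //; first by rewrite /c ltnn eqn0Ngt t_gt0.
move=> m; rewrite leq_eqVlt => /orP[/eqP ->|lt_mt].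
  rewrite /c ltnn eqn0Ngt t_gt0 (psum_npos lam_bullet) psum_full //; exact: wcomp_mu.
rewrite /c lt_mt; case: eqP => [->|_]; first by rewrite !psum0.
case: pickP => [i /eqP //|no_hit].
have [i hit] := hits (Ordinal (leq_trans lt_mt (npos_leq lam))) lt_mt.
by move: (no_hit i); rewrite hit eqxx.
Qed.

Lemma ro_cb_refinements A : cb lam A -> refinements r lam (ro A).
Proof.
move=> [A_cbd co_A]; have wcomp_ro : wcomp r (ro A).
  rewrite /wcomp /ro exchange_big -(proj1 lam_bullet).
  by apply: eq_bigr => j _; exact: co_A.
split => //; apply: refines_of_psum_hits => // k lt_kt.
have [i0 A_i0k_gt0] : exists i, 0 < A i k.
  by apply: sum_nat_gt0_exists; rewrite -/(co A k) co_A (wcomp_bullet_posE lam_bullet).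
case: (arg_minnP (P := fun i => 0 < A i k) val A_i0k_gt0) => i A_ik_gt0 i_min.
exists i; rewrite (cbd_psum_ro A_cbd A_ik_gt0) (eq_psum co_A).
suff -> : psum (fun i' => A i' k) i = 0 by rewrite addn0.
apply: big1 => i' lt_i'i; apply/eqP; rewrite -leqn0 leqNgt; apply/negP.
by move=> /i_min; rewrite leqNgt lt_i'i.
Qed.

Lemma co_cb_mx mu : refinements r lam mu -> co (cb_mx lam mu) =1 lam.
Proof.
move=> [_ refines_mu] k; case: (posnP (lam k)) => [lam_k0|lam_k_gt0].
  rewrite lam_k0 /co big1 // => i _; rewrite mxE /in_block lam_k0 addn0.
  by case: ifP => // /andP[lo hi]; have := leq_ltn_trans lo hi; rewrite ltnn.
have lt_kt : k < npos lam by rewrite -(wcomp_bullet_posE lam_bullet).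
case: refines_mu => [t0|[c [c0 _ c_lt c_blocks]]]; first by rewrite t0 in lt_kt.
have c_hits m : m <= npos lam -> psum mu (c m) = psum lam m.
  elim: m => [|m IHm] le_mt; first by rewrite c0 !psum0.
  have lt_mn : m < n := leq_trans le_mt (npos_leq lam).
  rewrite (psum_split mu (ltnW (c_lt m le_mt))) IHm; last exact: ltnW.
  by rewrite (psumS lam (Ordinal lt_mn)) (c_blocks (Ordinal lt_mn)).
rewrite /co (c_blocks k lt_kt) [RHS]big_mkcond /=; apply: eq_bigr => i _.
rewrite mxE; case: (posnP (mu i)) => [->|mu_i_gt0]; first by do 2!case: ifP.
rewrite /in_block -psumS -!c_hits ?(ltnW lt_kt) //.
by rewrite psum_leq_pos ?psum_ltn_pos.
Qed.

End Refinements.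

Theorem mainTheorem2 (n r : nat) (lam : 'I_n -> nat) :
  wcomp_bullet r lam ->
  [/\ (forall A : 'M[nat]_n, cb lam A -> refinements r lam (ro A)),
      (forall A B : 'M[nat]_n, cb lam A -> cb lam B -> ro A =1 ro B -> A = B) &
      (forall mu : 'I_n -> nat, refinements r lam mu ->
         exists2 A : 'M[nat]_n, cb lam A & ro A =1 mu)].
Proof.
move=> lam_bullet; split.
- by move=> A; exact: ro_cb_refinements.
- move=> A B cb_A cb_B eq_ro.
  by rewrite (cb_eq_cb_mx cb_A) (cb_eq_cb_mx cb_B); exact: eq_cb_mx.
- move=> mu refinements_mu; exists (cb_mx lam mu).
    by split; [exact: col_block_diag_cb_mx | exact: co_cb_mx refinements_mu].
  apply: ro_cb_mx; rewrite (proj1 lam_bullet); exact: esym (proj1 refinements_mu).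
Qed.
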